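(* Let $\mathsf{Op}$ be an operational theory and $\widetilde{\mathsf{Op}}$ the GPT obtained from $\mathsf{Op}$ by quotienting. The following are equivalent: (i) there exists a noncontextual ontological model $\xi_{\mathrm{nc}}:\mathsf{Op}\to\mathbf{SubStoch}$ of $\mathsf{Op}$; (ii) there exists an ontological model $\widetilde\xi:\widetilde{\mathsf{Op}}\to\mathbf{SubStoch}$ of $\widetilde{\mathsf{Op}}$; (iii) there exists a positive quasiprobabilistic model $\hat\xi^+:\widetilde{\mathsf{Op}}\to\mathbf{QuasiSubStoch}$ of $\widetilde{\mathsf{Op}}$.
   Context: A process theory consists of systems (closed under a composition $A\otimes B$, with a trivial system $I$) and processes $T:A\to B$, closed under sequential composition $\circ$ and parallel composition $\otimes$ and containing identities; processes $I\to A$ are states, $A\to I$ effects, $I\to I$ closed diagrams. An operational theory is a process theory $\mathsf{Op}$ (of laboratory procedures) with a probability rule $p$ assigning to each closed diagram $D$ a number $p(D)\in[0,1]$, with $p(D_1\otimes D_2)=p(D_1)p(D_2)$. A tester for type $A\to B$ is a triple $\tau=(s,e,W)$: a system $W$, a process $s:I\to A\otimes W$ and $e:B\otimes W\to I$; $\tau[T]:=e\circ(T\otimes\mathrm{id}_W)\circ s$. Processes $T,T':A\to B$ are operationally equivalent, $T\simeq T'$, iff $p(\tau[T])=p(\tau[T'])$ for all testers. Standing assumptions: mixtures of any two processes of the same type with any weights $\omega,1-\omega$ exist as processes $T_1$ with $p(\tau[T_1])=\omega p(\tau[T_2])+(1-\omega)p(\tau[T_3])$ for all $\tau$; coarse-grainings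 of effects add probabilities; all deterministic effects on a system are operationally equivalent; finitely many testers suffice to decide $\simeq$ for each type. The associated GPT $\widetilde{\mathsf{Op}}$ has the same systems and as processes the equivalence classes $\widetilde T$ under $\simeq$, composed via representatives; closed diagrams are identified with their probabilities; classes are identified with vectors of probabilities on a finite tomographically complete set of testers, giving meaning to linear combinations, and mixtures give convex combinations $\widetilde T_1=\omega\widetilde T_2+(1-\omega)\widetilde T_3$. The class of deterministic effects on $A$ is $u_A$. $\mathbf{QuasiSubStoch}$ has systems $\mathbb{R}^\Lambda$ for finite sets $\Lambda$ (with $\mathbb{R}^\Lambda\otimes\mathbb{R}^{\Lambda'}=\mathbb{R}^{\Lambda\times\Lambda'}$, trivial system $\mathbb{R}$) and processes given by real matrices $f(\lambda'|\lambda)$ (linear maps), composed by composition and tensor product; $\mathbf{SubStoch}$ is its subtheory of substochastic maps ($f(\lambda'|\lambda)\in[0,1]$, $\sum_{\lambda'}f(\lambda'|\lambda)\le1$). $\mathbf{1}_\Lambda$ is the all-ones covector. A diagram-preserving map into $\mathbf{QuasiSubStoch}$ (resp. $\mathbf{SubStoch}$) sends each system $A$ to some $\mathbb{R}^{\Lambda_A}$, composites to tensor products, $I$ to $\mathbb{R}$, processes to processes of matching type, preserving $\circ$, $\otimes$ and identities. An ontological model of $\mathsf{Op}$ is a diagram-preserving $\xi:\mathsf{Op}\to\mathbf{SubStoch}$ mapping every deterministic effect on $A$ to $\mathbf{1}_{\Lambda_A}$, reproducing $p$ on closed diagrams, and preserving mixtures and coarse-grainings; it is noncontextual if $T\simeq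 T'\Rightarrow\xi(T)=\xi(T')$. An ontological model (resp. quasiprobabilistic model) of $\widetilde{\mathsf{Op}}$ is a diagram-preserving map $\widetilde{\mathsf{Op}}\to\mathbf{SubStoch}$ (resp. $\to\mathbf{QuasiSubStoch}$) mapping $u_A$ to $\mathbf{1}_{\Lambda_A}$, mapping each closed diagram to its probability, and preserving convex combinations and coarse-graining relations. A quasiprobabilistic model is positive if all matrix entries of all maps in its image are nonnegative, i.e. its image lies in $\mathbf{SubStoch}$. *)

From HB Require Import structures.
From mathcomp Require Import all_boot all_order all_algebra.
From mathcomp Require Import mxtens.
From mathcomp Require Export reals.

Set Implicit Arguments.
Unset Strict Implicit.
Unset Printing Implicit Defensive.

Import Order.TTheory GRing.Theory Num.Theory.
Local Open Scope ring_scope.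

Definition castP (S : Type) (P : S -> S -> Type) (A A' B B' : S)
  (eA : A = A') (eB : B = B') (f : P A B) : P A' B' :=
  match eA in _ = A1, eB in _ = B1 return P A1 B1 with
  | erefl, erefl => f end.
Arguments castP {S} P {A A' B B'} eA eB f.

Record processTheory := ProcessTheory {
  sys : Type;
  stens : sys -> sys -> sys;
  sunit : sys;
  proc : sys -> sys -> Type;
  comp : forall A B C, proc B C -> proc A B -> proc A C;
  ptens : forall A B C D, proc A B -> proc C D -> proc (stens A C) (stens B D);
  pid : forall A, proc A A;
  stens_unitl : forall A, stens sunit A = A;
  stens_unitr : forall A, stens A sunit = A;
  stens_assoc : forall A B C, stens (stens A B) C = stens A (stens B C);
  comp_assoc : forall A B C D (f : proc A B) (g : proc B C) (h : proc C D),
    comp h (comp g f) = comp (comp h g) f;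
  comp_idl : forall A B (f : proc A B), comp (pid B) f = f;
  comp_idr : forall A B (f : proc A B), comp f (pid A) = f;
  ptens_id : forall A B, ptens (pid A) (pid B) = pid (stens A B);
  interchange : forall A B C A' B' C' (f : proc A B) (g : proc B C)
      (f' : proc A' B') (g' : proc B' C'),
    ptens (comp g f) (comp g' f') = comp (ptens g g') (ptens f f');
  ptens_unitl : forall A B (f : proc A B),
    castP proc (stens_unitl A) (stens_unitl B) (ptens (pid sunit) f) = f;
  ptens_unitr : forall A B (f : proc A B),
    castP proc (stens_unitr A) (stens_unitr B) (ptens f (pid sunit)) = f;
  ptens_assoc : forall A B C A' B' C' (f : proc A A') (g : proc B B') (h : proc C C'),
    castP proc (stens_assoc A B C) (stens_assoc A' B' C') (ptens (ptens f g) h)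
    = ptens f (ptens g h)
}.

Arguments comp {p A B C}.
Arguments ptens {p A B C D}.
Arguments pid {p}.
Arguments sunit {p}.
Arguments stens {p}.

Definition unit_tens (T : processTheory) : stens (@sunit T) sunit = sunit :=
  stens_unitl sunit.

Record tester (T : processTheory) (A B : sys T) := Tester {
  tW : sys T;
  tS : proc (@sunit T) (stens A tW);
  tE : proc (stens B tW) (@sunit T)
}.

Definition apply_tester (T : processTheory) (A B : sys T) (tau : tester A B)
  (f : proc A B) : proc (@sunit T) sunit :=
  comp (tE tau) (comp (ptens f (pid (tW tau))) (tS tau)).

Record opTheory (R : realType) := OpTheory {
  opt :> processTheory;
  prob : proc (@sunit opt) sunit -> R;
  prob_range : forall D, 0 <= prob D <= 1;
  prob_mult : forall D1 D2 : proc (@sunit opt) sunit,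
    prob (castP (@proc opt) (unit_tens opt) (unit_tens opt) (ptens D1 D2)) = prob D1 * prob D2;
  mix : forall A B : sys opt, R -> proc A B -> proc A B -> proc A B;
  mix_prob : forall (A B : sys opt) (w : R) (T2 T3 : proc A B) (tau : tester A B),
    0 <= w <= 1 ->
    prob (apply_tester tau (mix w T2 T3))
    = w * prob (apply_tester tau T2) + (1 - w) * prob (apply_tester tau T3);
  (* coarse-graining: [coarse e e1 e2] means e is the coarse-graining of e1, e2 *)
  coarse : forall A : sys opt, proc A sunit -> proc A sunit -> proc A sunit -> Prop;
  coarse_prob : forall (A : sys opt) (e e1 e2 : proc A sunit) (tau : tester A sunit),
    coarse e e1 e2 ->
    prob (apply_tester tau e) = prob (apply_tester tau e1) + prob (apply_tester tau e2);
  deterministic : forall A : sys opt, proc A sunit -> Prop;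
  deterministic_ex : forall A : sys opt, exists e : proc A sunit, deterministic e;
  deterministic_equiv : forall (A : sys opt) (e e' : proc A sunit),
    deterministic e -> deterministic e' ->
    forall tau : tester A sunit, prob (apply_tester tau e) = prob (apply_tester tau e');
  tomographic : forall A B : sys opt, exists (n : nat) (taus : 'I_n -> tester A B),
    forall T T' : proc A B,
      (forall i, prob (apply_tester (taus i) T) = prob (apply_tester (taus i) T')) ->
      forall tau, prob (apply_tester tau T) = prob (apply_tester tau T')
}.

Section Models.
Variable R : realType.
Variable Op : opTheory R.

Definition opeq (A B : sys Op) (T T' : proc A B) : Prop :=
  forall tau : tester A B, prob (apply_tester tau T) = prob (apply_tester tau T').

(* the GPT class of T, identified with its vector of probabilities on testers *)
Definition cls (A B : sys Op) (T : proc A B) : tester A B -> R :=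
  fun tau => prob (apply_tester tau T).

(* QuasiSubStoch: system R^Lambda with Lambda = 'I_n (n = lam A);        *)
(* R^'I_m (x) R^'I_n = R^'I_(m*n) (pairs indexed via mxtens_index).      *)
(* A process A -> B is a real matrix M : 'M_(lam A, lam B) with           *)
(* M l l' = f(l' | l); sequential composition g o f is  M_f *m M_g,     *)
(* parallel composition the tensor (Kronecker) product tensmx.          *)
Record sysMap := SysMap {
  lam : sys Op -> nat;
  lam_unit : lam sunit = 1%N;
  lam_tens : forall A B, lam (stens A B) = (lam A * lam B)%N
}.

Definition diagram_preserving (L : sysMap)
  (F : forall A B : sys Op, proc A B -> 'M[R]_(lam L A, lam L B)) : Prop :=
  [/\ (forall A B C (f : proc A B) (g : proc B C), F _ _ (comp g f) = F _ _ f *m F _ _ g),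
      (forall A, F _ _ (pid A) = 1%:M) &
      (forall A B C D (f : proc A B) (g : proc C D),
         F _ _ (ptens f g) =
         castmx (esym (lam_tens L A C), esym (lam_tens L B D)) (tensmx (F _ _ f) (F _ _ g)))].

Definition substoch (m n : nat) (M : 'M[R]_(m, n)) : Prop :=
  (forall i j, 0 <= M i j <= 1) /\ (forall i, \sum_j M i j <= 1).

Definition ones_eff (L : sysMap) (A : sys Op) : 'M[R]_(lam L A, lam L sunit) :=
  castmx (erefl, esym (lam_unit L)) (const_mx 1).

Definition prob_mx (L : sysMap) (r : R) : 'M[R]_(lam L sunit, lam L sunit) :=
  castmx (esym (lam_unit L), esym (lam_unit L)) r%:M.

Definition ontological_model (L : sysMap)
  (F : forall A B : sys Op, proc A B -> 'M[R]_(lam L A, lam L B)) : Prop :=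
  diagram_preserving F /\
  (forall A B (T : proc A B), substoch (F _ _ T)) /\
  [/\ (forall A (e : proc A sunit), deterministic e -> F _ _ e = ones_eff L A),
      (forall D : proc sunit sunit, F _ _ D = prob_mx L (prob D)),
      (forall A B (w : R) (T2 T3 : proc A B), 0 <= w <= 1 ->
         F _ _ (mix w T2 T3) = w *: F _ _ T2 + (1 - w) *: F _ _ T3) &
      (forall A (e e1 e2 : proc A sunit), coarse e e1 e2 ->
         F _ _ e = F _ _ e1 + F _ _ e2)].

Definition noncontextual (L : sysMap)
  (F : forall A B : sys Op, proc A B -> 'M[R]_(lam L A, lam L B)) : Prop :=
  forall A B (T T' : proc A B), opeq T T' -> F _ _ T = F _ _ T'.

(* A map on the GPT: defined on classes (probability vectors).  Since      *)
(* every GPT process is the class of an Op process and GPT composition is  *)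
(* via representatives, its conditions are stated on [cls T].              *)
Definition gptMap (L : sysMap) :=
  forall A B : sys Op, (tester A B -> R) -> 'M[R]_(lam L A, lam L B).

Definition quasi_model (L : sysMap) (G : gptMap L) : Prop :=
  [/\ diagram_preserving (fun A B T => G A B (cls T)),
      (forall A (e : proc A sunit), deterministic e -> G _ _ (cls e) = ones_eff L A),
      (forall D : proc sunit sunit, G _ _ (cls D) = prob_mx L (prob D)),
      (forall A B (w : R) (T1 T2 T3 : proc A B), 0 <= w <= 1 ->
         cls T1 = (fun tau => w * cls T2 tau + (1 - w) * cls T3 tau) ->
         G _ _ (cls T1) = w *: G _ _ (cls T2) + (1 - w) *: G _ _ (cls T3)) &
      (forall A (e e1 e2 : proc A sunit), coarse e e1 e2 ->
         G _ _ (cls e) = G _ _ (cls e1) + G _ _ (cls e2))].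

Definition gpt_ontological_model (L : sysMap) (G : gptMap L) : Prop :=
  quasi_model G /\ (forall A B (T : proc A B), substoch (G _ _ (cls T))).

Definition positive_quasi_model (L : sysMap) (G : gptMap L) : Prop :=
  quasi_model G /\ (forall A B (T : proc A B), substoch (G _ _ (cls T))).

End Models.

(* The implication (i) => (ii) holds because a noncontextual model gives the
   same matrix to operationally equivalent procedures, so it factors through
   the quotient map T |-> cls T; conversely any model of the GPT, composed with
   the quotient map, is an ontological model of Op, noncontextual by
   construction.  An ontological model of the GPT and a positive
   quasiprobabilistic model are the same object: a quasiprobabilistic model
   whose image lies in SubStoch. *)
From mathcomp Require Import all_boot all_order all_algebra.
From mathcomp Require Import boolp.

Set Implicit Arguments.
Unset Strict Implicit.
Unset Printing Implicit Defensive.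

Local Open Scope ring_scope.

Section QuotientModels.
Variable R : realType.
Variable Op : opTheory R.

Lemma cls_eqP (A B : sys Op) (T T' : proc A B) : cls T = cls T' <-> opeq T T'.
Proof.
split=> [eqTT' tau|opTT']; first by have := congr1 (fun f => f tau) eqTT'.
by apply: funext => tau; apply: opTT'.
Qed.

Lemma cls_mix (A B : sys Op) (w : R) (T2 T3 : proc A B) : 0 <= w <= 1 ->
  cls (mix w T2 T3) = (fun tau => w * cls T2 tau + (1 - w) * cls T3 tau).
Proof. by move=> w01; apply: funext => tau; rewrite /cls mix_prob. Qed.

Variable L : sysMap Op.

(* Probability vectors that are not the class of any procedure are sent to 0. *)
Definition gpt_lift (F : forall A B : sys Op, proc A B -> 'M[R]_(lam L A, lam L B)) :
    gptMap L :=
  fun A B v =>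
    if pselect (exists T : proc A B, cls T = v) is left clsT
    then F A B (projT1 (cid clsT)) else 0.

Section Lift.
Variable F : forall A B : sys Op, proc A B -> 'M[R]_(lam L A, lam L B).
Hypothesis F_nc : noncontextual F.

Lemma gpt_lift_cls A B (T : proc A B) : gpt_lift F (cls T) = F T.
Proof.
rewrite /gpt_lift; case: pselect => [clsT|[]]; last by exists T.
case: cid => T' /= /cls_eqP opT'T.
exact: F_nc.
Qed.

Lemma gpt_lift_clsE : (fun A B (T : proc A B) => gpt_lift F (cls T)) = F.
Proof.
do 2![apply: functional_extensionality_dep => ?].
by apply: funext => T; apply: gpt_lift_cls.
Qed.

Lemma noncontextual_gpt_ontological_model :
  ontological_model F -> gpt_ontological_model (gpt_lift F).
Proof.
move=> [F_dp [F_ss [F_det F_closed F_mix F_coarse]]].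
split; last by move=> A B T; rewrite gpt_lift_cls.
split; first by rewrite gpt_lift_clsE.
- by move=> A e dete; rewrite gpt_lift_cls F_det.
- by move=> D; rewrite gpt_lift_cls F_closed.
- move=> A B w T1 T2 T3 w01 clsT1; rewrite !gpt_lift_cls -F_mix //.
  by apply: F_nc; apply/cls_eqP; rewrite cls_mix.
- by move=> A e e1 e2 ce; rewrite !gpt_lift_cls (F_coarse _ _ _ _ ce).
Qed.

End Lift.

Section Restrict.
Variable G : gptMap L.

Lemma cls_noncontextual : noncontextual (fun A B (T : proc A B) => G (cls T)).
Proof. by move=> A B T T' /cls_eqP ->. Qed.

Lemma gpt_ontological_model_cls :
  gpt_ontological_model G -> ontological_model (fun A B (T : proc A B) => G (cls T)).
Proof.
move=> [[G_dp G_det G_closed G_mix G_coarse] G_ss].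
do 2!split=> //; split=> // A B w T2 T3 w01.
by apply: G_mix => //; apply: cls_mix.
Qed.

Lemma gpt_ontological_positive_quasi_model :
  gpt_ontological_model G <-> positive_quasi_model G.
Proof. by []. Qed.

End Restrict.

End QuotientModels.

Theorem corollary2 (R : realType) (Op : opTheory R) :
  ((exists (L : sysMap Op) (F : forall A B : sys Op, proc A B -> 'M[R]_(lam L A, lam L B)),
       ontological_model F /\ noncontextual F) <->
   (exists (L : sysMap Op) (G : gptMap L), gpt_ontological_model G)) /\
  ((exists (L : sysMap Op) (G : gptMap L), gpt_ontological_model G) <->
   (exists (L : sysMap Op) (G : gptMap L), positive_quasi_model G)).
Proof.
split; split.
- move=> [L [F [F_model F_nc]]].
  by exists L, (gpt_lift F); apply: noncontextual_gpt_ontological_model.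
- move=> [L [G G_model]]; exists L, (fun A B T => G _ _ (cls T)).
  by split; [apply: gpt_ontological_model_cls | apply: cls_noncontextual].
- by move=> [L [G /gpt_ontological_positive_quasi_model G_pos]]; exists L, G.
- by move=> [L [G /gpt_ontological_positive_quasi_model G_model]]; exists L, G.
Qed.
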